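(* Let $(\alpha,\beta)\in\mathbb{R}^2\setminus\{(0,0)\}$ and let $\overline y$ be the solution of $\ddot y+3y+\frac32y^3=0$, $y(0)=\alpha$, $\dot y(0)=\beta$, with energy $E_1=\frac{\beta^2}{2}+\frac32\alpha^2+\frac38\alpha^4$. Then $\overline y$ is torsionally stable, i.e. the trivial solution of the Hill equation $\ddot\xi+\big(7+\frac{27}{2}\overline y(t)^2\big)\xi=0$ is stable in the Lyapunov sense, provided that $\|\overline y\|_\infty\le\sqrt{10/21}$ or, equivalently, provided that $E_1\le\frac{235}{294}$.
   Context: $\overline y$ is the first vertical mode of the one-mode system $\ddot y_1+3y_1+\frac32y_1^3+\frac92y_1z_1^2=0$, $\ddot z_1+7z_1+\frac92z_1^3+\frac{27}{2}z_1y_1^2=0$ (the solution with $z_1\equiv0$), and the Hill equation is the linearization of the $z_1$-equation around $(\overline y,0)$. Stability of the trivial solution means that solutions with small $|\xi(0)|,|\dot\xi(0)|$ remain small for all $t\ge0$. *)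

From Stdlib Require Import Reals.
From Coquelicot Require Import Coquelicot.
Open Scope R_scope.

Definition energy1 (alpha beta : R) : R :=
  beta ^ 2 / 2 + 3 / 2 * alpha ^ 2 + 3 / 8 * alpha ^ 4.

Definition hill_trivial_stable (q : R -> R) : Prop :=
  forall eps : R, 0 < eps ->
  exists delta : R, 0 < delta /\
  forall xi dxi : R -> R,
    (forall t, is_derive xi t (dxi t)) ->
    (forall t, is_derive dxi t (- (q t * xi t))) ->
    Rabs (xi 0) < delta -> Rabs (dxi 0) < delta ->
    forall t, 0 <= t -> Rabs (xi t) < eps /\ Rabs (dxi t) < eps.

From Stdlib Require Import Reals Lra Lia Psatz Classical.
From Coquelicot Require Import Coquelicot.
Open Scope R_scope.

(* The mode y is an anharmonic oscillation: if y(z0) = 0 and t1 is the next turning point, the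
   reflections of the equation about t1 and about the next zero z1 give y (t + T) = - y t with
   T = 2 (z1 - t1), so the Hill coefficient q = 7 + 27/2 y^2 is T-periodic.  Sturm comparison
   of y'' + (3 + 3/2 y^2) y = 0 with sin, together with the energy identity along the descent
   from the amplitude A = y t1 to 0, gives 3 + 3/4 A^2 <= (PI/T)^2 < 3 + 3/2 A^2.  Hence, when
   A^2 <= 10/21,
     (PI/T)^2 < 7 <= q <= 7 + 27/2 A^2 <= 4 (3 + 3/4 A^2) <= (2 PI/T)^2,
   with strict inequality on the right somewhere in every interval.  This is Zhukovskii's
   stability criterion: Sturm comparison shows that no nonzero solution can satisfy
   z (t + T) = mu z t, so the monodromy matrix (of determinant 1 by Abel's identity) has trace
   in (-2, 2), and every solution is bounded. *)

(* Coquelicot's derivative rules are stated on normed modules and do not unify with functions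
   R -> R under [apply]; the [is_derive_R*] forms below are their real instances. *)

Lemma is_derive_eq (f : R -> R) (x l l' : R) : is_derive f x l -> l = l' -> is_derive f x l'.
Proof. intros H ->; exact H. Qed.

Lemma is_derive_Rplus (f g : R -> R) (x a b : R) : is_derive f x a -> is_derive g x b ->
  is_derive (fun t => f t + g t) x (a + b).
Proof. intros; apply (is_derive_plus f g x a b); auto. Qed.

Lemma is_derive_Rminus (f g : R -> R) (x a b : R) : is_derive f x a -> is_derive g x b ->
  is_derive (fun t => f t - g t) x (a - b).
Proof. intros; apply (is_derive_minus f g x a b); auto. Qed.

Lemma is_derive_Rmult (f g : R -> R) (x a b : R) : is_derive f x a -> is_derive g x b ->
  is_derive (fun t => f t * g t) x (a * g x + f x * b).
Proof. intros Hf Hg. apply (is_derive_mult f g x a b); auto. intros; apply Rmult_comm. Qed.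

Lemma is_derive_Ropp (f : R -> R) (x a : R) : is_derive f x a -> is_derive (fun t => - f t) x (- a).
Proof. intros; apply (is_derive_opp f x a); auto. Qed.

Lemma is_derive_Rscal (f : R -> R) (x k a : R) : is_derive f x a ->
  is_derive (fun t => k * f t) x (k * a).
Proof. apply is_derive_scal. Qed.

Lemma is_derive_Rsqr (f : R -> R) (x a : R) : is_derive f x a ->
  is_derive (fun t => f t ^ 2) x (2 * f x * a).
Proof. intros H. eapply is_derive_eq. apply is_derive_pow, H. simpl; ring. Qed.

Lemma is_derive_Rcomp (f g : R -> R) (x df dg : R) : is_derive f (g x) df -> is_derive g x dg ->
  is_derive (fun t => f (g t)) x (dg * df).
Proof. intros; apply (is_derive_comp f g x df dg); auto. Qed.

Lemma is_derive_Rid (x : R) : is_derive (fun t => t) x 1.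
Proof. exact (is_derive_id x). Qed.

Lemma is_derive_Rconst (c x : R) : is_derive (fun _ => c) x 0.
Proof. exact (is_derive_const c x). Qed.

Lemma is_derive_affine (k c x : R) : is_derive (fun t => k * t + c) x k.
Proof.
 eapply is_derive_eq. apply is_derive_Rplus. apply is_derive_Rscal, is_derive_Rid.
 apply is_derive_Rconst. ring.
Qed.

Lemma is_derive_comp_affine (f df : R -> R) (k c x : R) : (forall t, is_derive f t (df t)) ->
  is_derive (fun t => f (k * t + c)) x (k * df (k * x + c)).
Proof.
 intros H. apply (is_derive_Rcomp f (fun t => k * t + c)); [apply H | apply is_derive_affine].
Qed.

Lemma is_derive_shift (f df : R -> R) (c x : R) : (forall t, is_derive f t (df t)) ->
  is_derive (fun t => f (t + c)) x (df (x + c)).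
Proof.
 intros H. apply (is_derive_ext (fun t => f (1 * t + c))); [intros t; now rewrite Rmult_1_l|].
 replace (df (x + c)) with (1 * df (1 * x + c)) by (rewrite !Rmult_1_l; reflexivity).
 apply is_derive_comp_affine, H.
Qed.

Lemma is_derive_reflect (f df : R -> R) (c x : R) : (forall t, is_derive f t (df t)) ->
  is_derive (fun t => f (c - t)) x (- df (c - x)).
Proof.
 intros H. apply (is_derive_ext (fun t => f (-1 * t + c))); [intros t; f_equal; ring|].
 replace (- df (c - x)) with (-1 * df (-1 * x + c))
   by (replace (-1 * x + c) with (c - x) by ring; ring).
 apply is_derive_comp_affine, H.
Qed.

Lemma is_derive_increasing (f : R -> R) (x d : R) : is_derive f x d -> 0 < d ->
  exists del, 0 < del /\ forall h, 0 < h < del -> f (x - h) < f x < f (x + h).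
Proof.
 intros H Hd. apply is_derive_Reals in H.
 destruct (H (d / 2) ltac:(lra)) as [del Hdel].
 exists del. split; [apply cond_pos|]. intros h Hh.
 assert (Hr := Hdel h ltac:(lra) ltac:(rewrite Rabs_pos_eq; lra)).
 assert (Hl := Hdel (- h) ltac:(lra) ltac:(rewrite Rabs_left; lra)).
 replace (x + - h) with (x - h) in Hl by ring.
 apply Rabs_def2 in Hr. apply Rabs_def2 in Hl.
 assert (0 < (f (x + h) - f x) / h) by lra.
 assert (0 < (f (x - h) - f x) / - h) by lra.
 assert (0 < (f (x + h) - f x) / h * h) by (apply Rmult_lt_0_compat; lra).
 assert (0 < (f (x - h) - f x) / - h * h) by (apply Rmult_lt_0_compat; lra).
 replace ((f (x + h) - f x) / h * h) with (f (x + h) - f x) in * by (field; lra).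
 replace ((f (x - h) - f x) / - h * h) with (f x - f (x - h)) in * by (field; lra).
 lra.
Qed.

Lemma is_derive_continuity (f df : R -> R) : (forall t, is_derive f t (df t)) -> continuity f.
Proof. intros H x. apply derivable_continuous_pt. exists (df x). apply is_derive_Reals, H. Qed.

Lemma continuity_pt_near (f : R -> R) (x e : R) : continuity_pt f x -> 0 < e ->
  exists del, 0 < del /\ forall z, Rabs (z - x) < del -> Rabs (f z - f x) < e.
Proof.
 intros Hc He. destruct (Hc e He) as [del [Hdel H]]. exists del. split; [lra|].
 intros z Hz. destruct (Req_dec z x) as [->|Hne].
 - rewrite Rminus_diag, Rabs_R0; lra.
 - apply (H z). split; [split; [exact I | auto] | exact Hz].
Qed.

Lemma deriv_nonpos_le (f df : R -> R) (a b : R) : a <= b ->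
  (forall x, a <= x <= b -> is_derive f x (df x)) ->
  (forall x, a < x < b -> df x <= 0) -> f b <= f a.
Proof.
 intros Hab H Hd. destruct (Req_dec a b) as [->|Hne]; [lra|].
 destruct (MVT_cor2 f df a b ltac:(lra)) as [c [Hc Hc2]].
 - intros c Hc. apply is_derive_Reals, H; lra.
 - specialize (Hd c Hc2). nra.
Qed.

Lemma deriv_nonneg_le (f df : R -> R) (a b : R) : a <= b ->
  (forall x, a <= x <= b -> is_derive f x (df x)) ->
  (forall x, a < x < b -> 0 <= df x) -> f a <= f b.
Proof.
 intros Hab H Hd.
 enough (- f b <= - f a) by lra.
 apply (deriv_nonpos_le (fun t => - f t) (fun t => - df t) a b Hab).
 - intros; apply is_derive_Ropp; auto.
 - intros x Hx; specialize (Hd x Hx); lra.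
Qed.

Lemma deriv_nonneg_lt (f df : R -> R) (a b s : R) : a < s < b ->
  (forall x, a <= x <= b -> is_derive f x (df x)) ->
  (forall x, a < x < b -> 0 <= df x) -> 0 < df s -> f a < f b.
Proof.
 intros Hs H Hd Hds.
 destruct (is_derive_increasing f s (df s) (H s ltac:(lra)) Hds) as [del [Hdel Hinc]].
 set (h := Rmin (del / 2) ((b - s) / 2)).
 assert (0 < h) by (apply Rmin_pos; lra).
 assert (h < del) by (eapply Rle_lt_trans; [apply Rmin_l | lra]).
 assert (h <= (b - s) / 2) by apply Rmin_r.
 destruct (Hinc h ltac:(lra)) as [_ Hsh].
 assert (f a <= f s)
   by (apply (deriv_nonneg_le f df); [lra | intros; apply H; lra | intros; apply Hd; lra]).
 assert (f (s + h) <= f b)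
   by (apply (deriv_nonneg_le f df); [lra | intros; apply H; lra | intros; apply Hd; lra]).
 lra.
Qed.

Lemma deriv_zero_const (f : R -> R) (a b : R) : (forall x, is_derive f x 0) -> f a = f b.
Proof.
 intros H.
 assert (Hle : forall u v, u <= v -> f u = f v).
 { intros u v Huv. apply Rle_antisym.
   - apply (deriv_nonneg_le f (fun _ => 0)); intros; [lra | apply H | lra].
   - apply (deriv_nonpos_le f (fun _ => 0)); intros; [lra | apply H | lra]. }
 destruct (Rle_dec a b); [|symmetry]; apply Hle; lra.
Qed.

Lemma gronwall_forward (f df : R -> R) (K s t : R) : (forall x, is_derive f x (df x)) ->
  (forall x, df x <= K * f x) -> s <= t -> f t <= f s * exp (K * (t - s)).
Proof.
 intros H Hd Hst.
 assert (Hm : f t * exp (- K * t) <= f s * exp (- K * s)).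
 { apply (deriv_nonpos_le (fun x => f x * exp (- K * x))
     (fun x => (df x - K * f x) * exp (- K * x))); auto.
   - intros x _. eapply is_derive_eq.
     + apply is_derive_Rmult; [apply H|].
       apply (is_derive_Rcomp exp (fun x => - K * x)); [apply is_derive_exp|].
       apply is_derive_Rscal, is_derive_Rid.
     + cbv beta; ring.
   - intros x _. specialize (Hd x). pose proof (exp_pos (- K * x)). nra. }
 replace (K * (t - s)) with (- K * s - (- K * t)) by ring.
 unfold Rminus. rewrite exp_plus, exp_Ropp.
 pose proof (exp_pos (- K * t)).
 apply (Rmult_le_reg_r (exp (- K * t))); auto.
 replace (f s * (exp (- K * s) * / exp (- K * t)) * exp (- K * t)) with (f s * exp (- K * s))
   by (field; lra).
 exact Hm.
Qed.

Lemma gronwall_zero (f df : R -> R) (K t0 : R) : (forall x, is_derive f x (df x)) ->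
  (forall x, 0 <= f x) -> (forall x, Rabs (df x) <= K * f x) -> f t0 = 0 -> forall t, f t = 0.
Proof.
 intros H Hp Hd H0 t. apply Rle_antisym; [|apply Hp].
 destruct (Rle_dec t0 t).
 - pose proof (gronwall_forward f df K t0 t H
     ltac:(intros x; specialize (Hd x); apply Rabs_le_between in Hd; lra) r).
   rewrite H0, Rmult_0_l in H1. exact H1.
 - assert (Hrev : forall x, is_derive (fun u => f (- u)) x (- df (- x))).
   { intros x. apply (is_derive_ext (fun u => f (0 - u))); [intros; f_equal; ring|].
     replace (- x) with (0 - x) by ring. apply is_derive_reflect, H. }
   pose proof (gronwall_forward (fun x => f (- x)) (fun x => - df (- x)) K (- t0) (- t) Hrev
     ltac:(intros x; specialize (Hd (- x)); apply Rabs_le_between in Hd; lra) ltac:(lra)).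
   cbv beta in H1. rewrite !Ropp_involutive, H0, Rmult_0_l in H1. exact H1.
Qed.

Lemma first_zero (f : R -> R) (a b : R) : continuity f -> a < b -> 0 < f a -> f b <= 0 ->
  exists c, a < c <= b /\ f c = 0 /\ forall s, a <= s < c -> 0 < f s.
Proof.
 intros Hc Hab Ha Hb.
 set (E := fun x => a <= x <= b /\ forall s, a <= s <= x -> 0 < f s).
 assert (Ea : E a) by (split; [lra | intros s Hs; replace s with a by lra; auto]).
 destruct (completeness E ltac:(exists b; intros x [Hx _]; lra) ltac:(exists a; exact Ea))
   as [c [Hub Hlub]].
 assert (Hac : a <= c) by (apply Hub, Ea).
 assert (Hcb : c <= b) by (apply Hlub; intros x [Hx _]; lra).
 assert (Hbefore : forall s, a <= s < c -> 0 < f s).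
 { intros s Hs. destruct (classic (exists x, E x /\ s < x)) as [[x [[_ Hx] Hsx]]|Hn].
   - apply Hx; lra.
   - exfalso. enough (c <= s) by lra. apply Hlub. intros x Hx.
     destruct (Rle_dec x s); auto. exfalso; apply Hn; exists x; split; auto; lra. }
 assert (Hfc : f c = 0).
 { destruct (Rtotal_order (f c) 0) as [Hlt|[Heq|Hgt]]; auto; exfalso.
   - destruct (continuity_pt_near f c (- f c) (Hc c) ltac:(lra)) as [d [Hd Hnear]].
     assert (a < c) by (destruct (Req_dec a c) as [<-|]; lra).
     set (s := Rmax a (c - d / 2)).
     assert (a <= s < c) by (unfold s; split; [apply Rmax_l | apply Rmax_lub_lt; lra]).
     assert (c - d / 2 <= s) by apply Rmax_r.
     specialize (Hbefore s ltac:(lra)). specialize (Hnear s ltac:(rewrite Rabs_left; lra)).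
     apply Rabs_def2 in Hnear. lra.
   - destruct (continuity_pt_near f c (f c) (Hc c) Hgt) as [d [Hd Hnear]].
     assert (c < b) by (destruct (Req_dec c b) as [->|]; lra).
     set (x := Rmin b (c + d / 2)).
     assert (c < x <= b) by (unfold x; split; [apply Rmin_glb_lt; lra | apply Rmin_l]).
     assert (x <= c + d / 2) by apply Rmin_r.
     enough (E x) by (specialize (Hub x H2); lra).
     split; [lra|]. intros s Hs. destruct (Rlt_dec s c); [apply Hbefore; lra|].
     specialize (Hnear s ltac:(rewrite Rabs_pos_eq; lra)). apply Rabs_def2 in Hnear. lra. }
 exists c. repeat split; auto. destruct (Req_dec a c) as [<-|]; lra.
Qed.

Lemma first_zero_after (f df : R -> R) (a b : R) : (forall t, is_derive f t (df t)) ->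
  a < b -> f a = 0 -> 0 < df a -> f b = 0 ->
  exists c, a < c <= b /\ f c = 0 /\ forall s, a < s < c -> 0 < f s.
Proof.
 intros H Hab Fa Da Fb.
 destruct (is_derive_increasing f a (df a) (H a) Da) as [del [Hdel Hinc]].
 rewrite Fa in Hinc.
 set (h := Rmin (del / 2) ((b - a) / 2)).
 assert (0 < h) by (apply Rmin_pos; lra).
 assert (h < del) by (eapply Rle_lt_trans; [apply Rmin_l | lra]).
 assert (h <= (b - a) / 2) by apply Rmin_r.
 assert (Hnear : forall s, a < s <= a + h -> 0 < f s).
 { intros s Hs. replace s with (a + (s - a)) by ring. apply Hinc. lra. }
 destruct (first_zero f (a + h) b (is_derive_continuity f df H) ltac:(lra)
   ltac:(apply Hnear; lra) ltac:(lra)) as [c [Hc [Fc Hpos]]].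
 exists c. repeat split; auto; try lra.
 intros s Hs. destruct (Rle_dec s (a + h)); [apply Hnear | apply Hpos]; lra.
Qed.

Lemma deriv_nonpos_at_first_zero (f : R -> R) (a b d : R) : a < b -> is_derive f b d ->
  f b = 0 -> (forall s, a < s < b -> 0 < f s) -> d <= 0.
Proof.
 intros Hab H Fb Hpos. destruct (Rle_dec d 0) as [|Hd]; auto. exfalso.
 destruct (is_derive_increasing f b d H ltac:(lra)) as [del [Hdel Hinc]].
 set (h := Rmin (del / 2) ((b - a) / 2)).
 assert (0 < h) by (apply Rmin_pos; lra).
 assert (h < del) by (eapply Rle_lt_trans; [apply Rmin_l | lra]).
 assert (h <= (b - a) / 2) by apply Rmin_r.
 destruct (Hinc h ltac:(lra)) as [Hq _]. specialize (Hpos (b - h) ltac:(lra)). lra.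
Qed.

Lemma Rabs_mul2_le (c K u v : R) : Rabs c <= K -> Rabs (2 * c * u * v) <= K * (u ^ 2 + v ^ 2).
Proof.
 intros Hc. apply Rabs_le_between in Hc. apply Rabs_le.
 assert (0 <= (K - c) * (u + v) ^ 2) by (apply Rmult_le_pos; [lra | apply pow2_ge_0]).
 assert (0 <= (K + c) * (u - v) ^ 2) by (apply Rmult_le_pos; [lra | apply pow2_ge_0]).
 assert (0 <= (K + c) * (u + v) ^ 2) by (apply Rmult_le_pos; [lra | apply pow2_ge_0]).
 assert (0 <= (K - c) * (u - v) ^ 2) by (apply Rmult_le_pos; [lra | apply pow2_ge_0]).
 split; nra.
Qed.

Lemma exists_period_index (T t : R) : 0 < T -> 0 <= t ->
  exists n : nat, INR n * T <= t <= INR n * T + T.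
Proof.
 intros HT Ht. destruct (archimed (t / T)) as [Hu1 Hu2].
 assert (0 <= t / T) by (apply Rdiv_le_0_compat; lra).
 assert (Hup : (0 < up (t / T))%Z) by (apply lt_IZR; lra).
 exists (Z.to_nat (up (t / T) - 1)).
 rewrite INR_IZR_INZ, Znat.Z2Nat.id, minus_IZR by lia.
 assert (Ht' : t = t / T * T) by (field; lra).
 set (u := t / T) in *. rewrite Ht'.
 split; [|replace ((IZR (up u) - 1) * T + T) with (IZR (up u) * T) by ring];
   apply Rmult_le_compat_r; lra.
Qed.

Lemma recurrence_sq_bounded (x : nat -> R) (a : R) : Rabs a < 2 ->
  (forall n, x (S (S n)) = a * x (S n) - x n) -> exists C, forall n, x n ^ 2 <= C.
Proof.
 intros Ha Hrec.
 (* the quadratic form x_(n+1)^2 - a x_(n+1) x_n + x_n^2 is invariant and positive definite *)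
 set (I n := x (S n) ^ 2 - a * x (S n) * x n + x n ^ 2).
 assert (HI : forall n, I n = I 0%nat).
 { induction n as [|n IH]; auto. rewrite <- IH. unfold I. rewrite Hrec. ring. }
 exists (I 0%nat / (1 - Rabs a / 2)). intros n.
 apply (Rmult_le_reg_l (1 - Rabs a / 2)); [lra|].
 replace ((1 - Rabs a / 2) * (I 0%nat / (1 - Rabs a / 2))) with (I n) by (rewrite HI; field; lra).
 assert (a * x (S n) * x n <= Rabs a / 2 * (x (S n) ^ 2 + x n ^ 2)).
 { pose proof (Rabs_mul2_le (a / 2) (Rabs a / 2) (x (S n)) (x n)) as Hb.
   rewrite Rabs_div, (Rabs_pos_eq 2) in Hb by lra.
   specialize (Hb (Rle_refl _)). apply Rabs_le_between in Hb.
   replace (2 * (a / 2) * x (S n) * x n) with (a * x (S n) * x n) in Hb by field. lra. }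
 pose proof (pow2_ge_0 (x (S n))). pose proof (Rabs_pos a). unfold I. nra.
Qed.

(** * Sturm comparison *)

Definition hill_sol (Q z dz : R -> R) : Prop :=
  (forall t, is_derive z t (dz t)) /\ (forall t, is_derive dz t (- (Q t * z t))).

Lemma hill_sol_lin (Q z1 dz1 z2 dz2 : R -> R) (c1 c2 : R) :
  hill_sol Q z1 dz1 -> hill_sol Q z2 dz2 ->
  hill_sol Q (fun t => c1 * z1 t + c2 * z2 t) (fun t => c1 * dz1 t + c2 * dz2 t).
Proof.
 intros [H1 H2] [H3 H4]. split; intros t.
 - apply is_derive_Rplus; apply is_derive_Rscal; auto.
 - eapply is_derive_eq; [apply is_derive_Rplus; apply is_derive_Rscal; auto | ring].
Qed.

Lemma hill_sol_opp (Q z dz : R -> R) : hill_sol Q z dz ->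
  hill_sol Q (fun t => - z t) (fun t => - dz t).
Proof.
 intros [H1 H2]; split; intros t; [apply is_derive_Ropp; auto|].
 eapply is_derive_eq; [apply is_derive_Ropp, H2 | ring].
Qed.

Lemma is_derive_sin_lin (m a x : R) :
  is_derive (fun t => sin (m * (t - a))) x (m * cos (m * (x - a))).
Proof.
 apply (is_derive_ext (fun t => sin (m * t + - (m * a)))); [intros; f_equal; ring|].
 replace (m * (x - a)) with (m * x + - (m * a)) by ring.
 apply is_derive_comp_affine, is_derive_sin.
Qed.

Lemma is_derive_cos_lin (m a x : R) :
  is_derive (fun t => cos (m * (t - a))) x (- m * sin (m * (x - a))).
Proof.
 apply (is_derive_ext (fun t => cos (m * t + - (m * a)))); [intros; f_equal; ring|].
 replace (- m * sin (m * (x - a))) with (m * - sin (m * x + - (m * a)))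
   by (replace (m * x + - (m * a)) with (m * (x - a)) by ring; ring).
 apply (is_derive_comp_affine cos (fun t => - sin t)), is_derive_cos.
Qed.

(* Wronskian of z with the comparison solution sin (m (t - a)) of w'' + m^2 w = 0 *)
Definition sturm_wronskian (z dz : R -> R) (m a t : R) : R :=
  dz t * sin (m * (t - a)) - z t * (m * cos (m * (t - a))).

Lemma is_derive_sturm_wronskian (Q z dz : R -> R) (m a t : R) : hill_sol Q z dz ->
  is_derive (sturm_wronskian z dz m a) t ((m * m - Q t) * z t * sin (m * (t - a))).
Proof.
 intros [H1 H2]. unfold sturm_wronskian. eapply is_derive_eq.
 - apply is_derive_Rminus; apply is_derive_Rmult; auto.
   + apply is_derive_sin_lin.
   + apply is_derive_Rscal, is_derive_cos_lin.
 - cbv beta; ring.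
Qed.

Lemma sin_lin_pos (m a x : R) : 0 < m -> a < x < a + PI / m -> 0 < sin (m * (x - a)).
Proof.
 intros Hm Hx. apply sin_gt_0; [apply Rmult_lt_0_compat; lra|].
 replace PI with (m * (PI / m)) by (field; lra). apply Rmult_lt_compat_l; lra.
Qed.

Lemma sin_lin_nonneg (m a x : R) : 0 < m -> a <= x <= a + PI / m -> 0 <= sin (m * (x - a)).
Proof.
 intros Hm Hx. apply sin_ge_0; [apply Rmult_le_pos; lra|].
 replace PI with (m * (PI / m)) by (field; lra). apply Rmult_le_compat_l; lra.
Qed.

Lemma sin_lin_half_period (m a : R) : 0 < m -> sin (m * (a + PI / m - a)) = 0.
Proof. intros Hm. replace (m * (a + PI / m - a)) with PI by (field; lra). apply sin_PI. Qed.

Lemma sturm_no_positive_arc (Q z dz : R -> R) (m s : R) : 0 < m -> hill_sol Q z dz ->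
  (forall t, s <= t <= s + PI / m -> m * m <= Q t) ->
  ~ (forall t, s <= t <= s + PI / m -> 0 < z t).
Proof.
 intros Hm Hh HQ Hz. pose proof PI_RGT_0.
 assert (0 < PI / m) by (apply Rdiv_lt_0_compat; lra).
 assert (Hle : sturm_wronskian z dz m s (s + PI / m) <= sturm_wronskian z dz m s s).
 { apply (deriv_nonpos_le _ _ s (s + PI / m) ltac:(lra)
     (fun t _ => is_derive_sturm_wronskian Q z dz m s t Hh)).
   intros x Hx. pose proof (sin_lin_nonneg m s x Hm ltac:(lra)).
   specialize (HQ x ltac:(lra)). specialize (Hz x ltac:(lra)).
   assert (0 <= (Q x - m * m) * z x * sin (m * (x - s)))
     by (repeat apply Rmult_le_pos; lra). nra. }
 unfold sturm_wronskian in Hle.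
 replace (m * (s + PI / m - s)) with PI in Hle by (field; lra).
 rewrite Rminus_diag, Rmult_0_r, sin_0, cos_0, sin_PI, cos_PI in Hle.
 pose proof (Hz s ltac:(lra)). pose proof (Hz (s + PI / m) ltac:(lra)). nra.
Qed.

Lemma sturm_no_positive_arc_between_zeros (Q z dz : R -> R) (m a : R) : 0 < m ->
  hill_sol Q z dz -> z a = 0 -> z (a + PI / m) = 0 ->
  (forall t, a < t < a + PI / m -> m * m < Q t) ->
  ~ (forall t, a < t < a + PI / m -> 0 < z t).
Proof.
 intros Hm Hh Za Zb HQ Hz. pose proof PI_RGT_0.
 assert (0 < PI / m) by (apply Rdiv_lt_0_compat; lra).
 assert (Hneg : forall x, a < x < a + PI / m -> 0 < (Q x - m * m) * z x * sin (m * (x - a))).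
 { intros x Hx. pose proof (sin_lin_pos m a x Hm Hx). specialize (HQ x Hx). specialize (Hz x Hx).
   repeat apply Rmult_lt_0_compat; lra. }
 assert (Hlt : - sturm_wronskian z dz m a a < - sturm_wronskian z dz m a (a + PI / m)).
 { apply (deriv_nonneg_lt (fun t => - sturm_wronskian z dz m a t)
     (fun t => - ((m * m - Q t) * z t * sin (m * (t - a))))
     a (a + PI / m) (a + PI / m / 2)); [lra | | |].
   - intros; apply is_derive_Ropp, (is_derive_sturm_wronskian Q), Hh.
   - intros x Hx. specialize (Hneg x Hx). lra.
   - specialize (Hneg (a + PI / m / 2) ltac:(lra)). lra. }
 unfold sturm_wronskian in Hlt. rewrite Za, Zb, (sin_lin_half_period m a Hm), Rminus_diag,
   Rmult_0_r, sin_0 in Hlt. lra.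
Qed.

Lemma sturm_zero_gap (Q z dz : R -> R) (M a b : R) : 0 < M -> hill_sol Q z dz -> a < b ->
  z a = 0 -> z b = 0 -> (forall t, a < t < b -> 0 < z t) ->
  (forall t, a < t < b -> Q t <= M * M) -> (exists s, a < s < b /\ Q s < M * M) ->
  PI / M < b - a.
Proof.
 intros HM Hh Hab Za Zb Hz HQ [s [Hs HQs]]. pose proof PI_RGT_0.
 destruct (Rlt_dec (PI / M) (b - a)) as [|Hn]; auto. exfalso.
 assert (Hlt : sturm_wronskian z dz M a a < sturm_wronskian z dz M a b).
 { apply (deriv_nonneg_lt _ _ a b s Hs (fun t _ => is_derive_sturm_wronskian Q z dz M a t Hh)).
   - intros x Hx. pose proof (sin_lin_nonneg M a x HM ltac:(lra)).
     specialize (HQ x Hx). specialize (Hz x Hx). repeat apply Rmult_le_pos; lra.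
   - pose proof (sin_lin_pos M a s HM ltac:(lra)). specialize (Hz s Hs).
     repeat apply Rmult_lt_0_compat; lra. }
 assert (dz b <= 0)
   by (destruct Hh as [Hh1 _]; apply (deriv_nonpos_at_first_zero z a b (dz b) Hab (Hh1 b) Zb Hz)).
 pose proof (sin_lin_nonneg M a b HM ltac:(lra)).
 unfold sturm_wronskian in Hlt. rewrite Za, Zb, Rminus_diag, Rmult_0_r, sin_0 in Hlt. nra.
Qed.

Lemma hill_sol_has_zero (Q z dz : R -> R) (m s : R) : 0 < m -> hill_sol Q z dz ->
  (forall t, m * m <= Q t) -> exists t0, s <= t0 <= s + PI / m /\ z t0 = 0.
Proof.
 intros Hm Hh HQ. pose proof PI_RGT_0. assert (0 < PI / m) by (apply Rdiv_lt_0_compat; lra).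
 destruct (classic (exists t0, s <= t0 <= s + PI / m /\ z t0 = 0)) as [|Hn]; auto. exfalso.
 assert (Hc : continuity z) by (destruct Hh as [H1 _]; apply (is_derive_continuity z dz H1)).
 assert (Hsign : forall t, s <= t <= s + PI / m -> z s * z t > 0).
 { intros t Ht. destruct (Rlt_dec 0 (z s * z t)) as [|Hle]; [lra|]. exfalso.
   destruct (Rle_dec (z s) (z t)).
   - destruct (IVT_cor z s t Hc ltac:(lra) ltac:(nra)) as [u [Hu Zu]].
     apply Hn; exists u; split; auto; lra.
   - destruct (IVT_cor (fun u => - z u) s t (continuity_opp z Hc) ltac:(lra) ltac:(nra))
       as [u [Hu Zu]].
     apply Hn; exists u; split; [lra | cbv beta in Zu; lra]. }
 destruct (Rlt_dec 0 (z s)) as [Hpos|Hnpos].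
 - apply (sturm_no_positive_arc Q z dz m s Hm Hh ltac:(auto)).
   intros t Ht. specialize (Hsign t Ht). nra.
 - apply (sturm_no_positive_arc Q _ _ m s Hm (hill_sol_opp Q z dz Hh) ltac:(auto)).
   intros t Ht. specialize (Hsign t Ht).
   assert (z s <> 0) by (intro E; rewrite E in Hsign; lra). nra.
Qed.

(** * Hill equations with a bounded coefficient *)

Lemma pow2_lt_of_Rabs_lt (u d : R) : Rabs u < d -> u ^ 2 < d ^ 2.
Proof. unfold Rabs; destruct (Rcase_abs u); nra. Qed.

Lemma Rabs_lt_of_pow2_lt (u e : R) : 0 < e -> u ^ 2 < e ^ 2 -> Rabs u < e.
Proof. unfold Rabs; destruct (Rcase_abs u); nra. Qed.

Definition hill_norm_bound (Q : R -> R) (L : R) : Prop :=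
  forall z dz, hill_sol Q z dz -> forall t, 0 <= t ->
    z t ^ 2 + dz t ^ 2 <= L * (z 0 ^ 2 + dz 0 ^ 2).

Lemma hill_stable_of_norm_bound (Q : R -> R) (L : R) : 0 <= L -> hill_norm_bound Q L ->
  hill_trivial_stable Q.
Proof.
 intros HL H eps He. set (d := eps / (2 * L + 2)).
 assert (Hd : 0 < d) by (apply Rdiv_lt_0_compat; lra).
 exists d. split; auto. intros xi dxi H1 H2 Hx Hv t Ht.
 assert (Hb := H xi dxi (conj H1 H2) t Ht).
 apply pow2_lt_of_Rabs_lt in Hx. apply pow2_lt_of_Rabs_lt in Hv.
 assert (Hkey : 2 * L * d ^ 2 < eps ^ 2).
 { unfold d. replace (2 * L * (eps / (2 * L + 2)) ^ 2) with (eps ^ 2 * (2 * L / (2 * L + 2) ^ 2))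
     by (field; lra).
   assert (2 * L / (2 * L + 2) ^ 2 < 1).
   { apply (Rmult_lt_reg_r ((2 * L + 2) ^ 2)); [nra|].
     replace (2 * L / (2 * L + 2) ^ 2 * (2 * L + 2) ^ 2) with (2 * L) by (field; lra). nra. }
   assert (0 < eps ^ 2) by nra. nra. }
 pose proof (pow2_ge_0 (xi t)). pose proof (pow2_ge_0 (dxi t)).
 split; apply Rabs_lt_of_pow2_lt; nra.
Qed.

Section BoundedCoefficient.

Variables (Q : R -> R) (K : R).
Hypothesis HQ : forall t, Rabs (1 - Q t) <= K.

Lemma is_derive_hill_sol_norm (z dz : R -> R) (t : R) : hill_sol Q z dz ->
  is_derive (fun t => z t ^ 2 + dz t ^ 2) t (2 * (1 - Q t) * z t * dz t).
Proof.
 intros [H1 H2]. eapply is_derive_eq; [apply is_derive_Rplus; apply is_derive_Rsqr; auto | ring].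
Qed.

Lemma hill_sol_norm_growth (z dz : R -> R) (s t : R) : hill_sol Q z dz -> s <= t ->
  z t ^ 2 + dz t ^ 2 <= (z s ^ 2 + dz s ^ 2) * exp (K * (t - s)).
Proof.
 intros Hh Hst. apply (gronwall_forward (fun t => z t ^ 2 + dz t ^ 2)
   (fun t => 2 * (1 - Q t) * z t * dz t)); auto.
 - intros x; apply is_derive_hill_sol_norm, Hh.
 - intros x. pose proof (Rabs_mul2_le (1 - Q x) K (z x) (dz x) (HQ x)) as Hb.
   apply Rabs_le_between in Hb. lra.
Qed.

Lemma hill_sol_zero (z dz : R -> R) (t0 : R) : hill_sol Q z dz -> z t0 = 0 -> dz t0 = 0 ->
  forall t, z t = 0 /\ dz t = 0.
Proof.
 intros Hh Z0 D0 t.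
 assert (Hn := gronwall_zero (fun t => z t ^ 2 + dz t ^ 2) (fun t => 2 * (1 - Q t) * z t * dz t)
   K t0 (fun x => is_derive_hill_sol_norm z dz x Hh)
   ltac:(intros; pose proof (pow2_ge_0 (z x)); pose proof (pow2_ge_0 (dz x)); lra)
   ltac:(intros x; apply Rabs_mul2_le, HQ) ltac:(cbv beta; rewrite Z0, D0; ring) t).
 cbv beta in Hn. pose proof (pow2_ge_0 (z t)). pose proof (pow2_ge_0 (dz t)). split; nra.
Qed.

Lemma hill_sol_unique (z dz w dw : R -> R) (t0 : R) : hill_sol Q z dz -> hill_sol Q w dw ->
  z t0 = w t0 -> dz t0 = dw t0 -> forall t, z t = w t /\ dz t = dw t.
Proof.
 intros Hz Hw E1 E2 t.
 destruct (hill_sol_zero _ _ t0 (hill_sol_lin Q z dz w dw 1 (-1) Hz Hw)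
   ltac:(cbv beta; rewrite E1; ring) ltac:(cbv beta; rewrite E2; ring) t).
 split; lra.
Qed.

Lemma hill_sol_span_norm_bound (z1 dz1 z2 dz2 : R -> R) (C1 C2 k : R) :
  (forall t, 0 <= t -> z1 t ^ 2 + dz1 t ^ 2 <= C1) ->
  (forall t, 0 <= t -> z2 t ^ 2 + dz2 t ^ 2 <= C2) -> 0 <= k ->
  (forall z dz, hill_sol Q z dz -> exists c1 c2,
     (forall t, z t = c1 * z1 t + c2 * z2 t /\ dz t = c1 * dz1 t + c2 * dz2 t) /\
     c1 ^ 2 + c2 ^ 2 <= k * (z 0 ^ 2 + dz 0 ^ 2)) ->
  exists L, 0 <= L /\ hill_norm_bound Q L.
Proof.
 intros HC1 HC2 Hk Hspan.
 assert (0 <= C1) by (specialize (HC1 0 ltac:(lra)); nra).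
 assert (0 <= C2) by (specialize (HC2 0 ltac:(lra)); nra).
 exists (2 * k * (C1 + C2)). split; [nra|].
 intros z dz Hh t Ht. destruct (Hspan z dz Hh) as [c1 [c2 [Hzt Hc]]].
 destruct (Hzt t) as [-> ->]. specialize (HC1 t Ht). specialize (HC2 t Ht).
 assert ((c1 * z1 t + c2 * z2 t) ^ 2 + (c1 * dz1 t + c2 * dz2 t) ^ 2
   <= 2 * (c1 ^ 2 * (z1 t ^ 2 + dz1 t ^ 2) + c2 ^ 2 * (z2 t ^ 2 + dz2 t ^ 2))).
 { pose proof (pow2_ge_0 (c1 * z1 t - c2 * z2 t)).
   pose proof (pow2_ge_0 (c1 * dz1 t - c2 * dz2 t)). nra. }
 pose proof (pow2_ge_0 c1). pose proof (pow2_ge_0 c2).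
 assert (c1 ^ 2 * (z1 t ^ 2 + dz1 t ^ 2) + c2 ^ 2 * (z2 t ^ 2 + dz2 t ^ 2)
   <= (c1 ^ 2 + c2 ^ 2) * (C1 + C2)) by nra.
 nra.
Qed.

Lemma hill_norm_bound_of_independent (z1 dz1 z2 dz2 : R -> R) (C1 C2 : R) :
  hill_sol Q z1 dz1 -> hill_sol Q z2 dz2 -> z1 0 * dz2 0 - dz1 0 * z2 0 <> 0 ->
  (forall t, 0 <= t -> z1 t ^ 2 + dz1 t ^ 2 <= C1) ->
  (forall t, 0 <= t -> z2 t ^ 2 + dz2 t ^ 2 <= C2) ->
  exists L, 0 <= L /\ hill_norm_bound Q L.
Proof.
 intros H1 H2 HD HC1 HC2.
 set (D := z1 0 * dz2 0 - dz1 0 * z2 0) in *.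
 assert (0 < D ^ 2) by (apply pow2_gt_0, HD).
 set (S := z1 0 ^ 2 + dz1 0 ^ 2 + z2 0 ^ 2 + dz2 0 ^ 2).
 apply (hill_sol_span_norm_bound z1 dz1 z2 dz2 C1 C2 (S / D ^ 2) HC1 HC2).
 { apply Rdiv_le_0_compat; [|lra]. unfold S. repeat apply Rplus_le_le_0_compat; apply pow2_ge_0. }
 (* Cramer's rule at t = 0 *)
 intros z dz Hh.
 set (n1 := z 0 * dz2 0 - dz 0 * z2 0). set (n2 := z1 0 * dz 0 - dz1 0 * z 0).
 exists (n1 / D), (n2 / D). split.
 - apply (hill_sol_unique z dz _ _ 0 Hh (hill_sol_lin Q z1 dz1 z2 dz2 _ _ H1 H2));
     unfold n1, n2, D in *; field; auto.
 - (* Lagrange's identity bounds both numerators *)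
   assert (n1 ^ 2 <= (z 0 ^ 2 + dz 0 ^ 2) * (z2 0 ^ 2 + dz2 0 ^ 2))
     by (pose proof (pow2_ge_0 (z 0 * z2 0 + dz 0 * dz2 0)); unfold n1; nra).
   assert (n2 ^ 2 <= (z 0 ^ 2 + dz 0 ^ 2) * (z1 0 ^ 2 + dz1 0 ^ 2))
     by (pose proof (pow2_ge_0 (z 0 * z1 0 + dz 0 * dz1 0)); unfold n2; nra).
   replace ((n1 / D) ^ 2 + (n2 / D) ^ 2) with ((n1 ^ 2 + n2 ^ 2) / D ^ 2) by (field; auto).
   replace (S / D ^ 2 * (z 0 ^ 2 + dz 0 ^ 2)) with (S * (z 0 ^ 2 + dz 0 ^ 2) / D ^ 2)
     by (field; auto).
   apply Rmult_le_compat_r; [left; apply Rinv_0_lt_compat; lra | unfold S; lra].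
Qed.

Lemma hill_norm_bound_of_dependent (z0 dz0 : R -> R) (C0 : R) :
  hill_sol Q z0 dz0 -> 0 < z0 0 ^ 2 + dz0 0 ^ 2 ->
  (forall t, 0 <= t -> z0 t ^ 2 + dz0 t ^ 2 <= C0) ->
  (forall z dz, hill_sol Q z dz -> z 0 * dz0 0 - dz 0 * z0 0 = 0) ->
  exists L, 0 <= L /\ hill_norm_bound Q L.
Proof.
 intros H0 HN HC0 Hdep. set (N := z0 0 ^ 2 + dz0 0 ^ 2) in *.
 apply (hill_sol_span_norm_bound z0 dz0 z0 dz0 C0 C0 (/ N) HC0 HC0
   ltac:(left; apply Rinv_0_lt_compat, HN)).
 intros z dz Hh. set (n := z 0 * z0 0 + dz 0 * dz0 0). exists (n / N), 0.
 assert (HW := Hdep z dz Hh).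
 assert (Ez : z 0 * N - n * z0 0 = dz0 0 * (z 0 * dz0 0 - dz 0 * z0 0)) by (unfold N, n; ring).
 assert (Edz : dz 0 * N - n * dz0 0 = - z0 0 * (z 0 * dz0 0 - dz 0 * z0 0)) by (unfold N, n; ring).
 rewrite HW in Ez, Edz. split.
 - apply (hill_sol_unique z dz _ _ 0 Hh (hill_sol_lin Q z0 dz0 z0 dz0 _ _ H0 H0)).
   + replace (n / N * z0 0 + 0 * z0 0) with (z 0 - (z 0 * N - n * z0 0) / N) by (field; lra).
     rewrite Ez. field; lra.
   + replace (n / N * dz0 0 + 0 * dz0 0) with (dz 0 - (dz 0 * N - n * dz0 0) / N) by (field; lra).
     rewrite Edz. field; lra.
 - assert (n ^ 2 <= (z 0 ^ 2 + dz 0 ^ 2) * N)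
     by (pose proof (pow2_ge_0 (z 0 * dz0 0 - dz 0 * z0 0)); unfold n, N; nra).
   apply (Rmult_le_reg_r (N * N)); [nra|].
   replace (((n / N) ^ 2 + 0 ^ 2) * (N * N)) with (n ^ 2) by (field; lra).
   replace (/ N * (z 0 ^ 2 + dz 0 ^ 2) * (N * N)) with ((z 0 ^ 2 + dz 0 ^ 2) * N) by (field; lra).
   assumption.
Qed.

Lemma hill_uniform_norm_bound :
  (forall z dz, hill_sol Q z dz -> exists C, forall t, 0 <= t -> z t ^ 2 + dz t ^ 2 <= C) ->
  exists L, 0 <= L /\ hill_norm_bound Q L.
Proof.
 intros Hbd.
 destruct (classic (exists z1 dz1 z2 dz2, hill_sol Q z1 dz1 /\ hill_sol Q z2 dz2 /\
   z1 0 * dz2 0 - dz1 0 * z2 0 <> 0)) as [[z1 [dz1 [z2 [dz2 [H1 [H2 HD]]]]]]|Hdep].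
 { destruct (Hbd z1 dz1 H1) as [C1 HC1]. destruct (Hbd z2 dz2 H2) as [C2 HC2].
   exact (hill_norm_bound_of_independent z1 dz1 z2 dz2 C1 C2 H1 H2 HD HC1 HC2). }
 destruct (classic (exists z0 dz0, hill_sol Q z0 dz0 /\ 0 < z0 0 ^ 2 + dz0 0 ^ 2))
   as [[z0 [dz0 [H0 HN]]]|Hnone].
 - destruct (Hbd z0 dz0 H0) as [C0 HC0].
   apply (hill_norm_bound_of_dependent z0 dz0 C0 H0 HN HC0).
   intros z dz Hh. apply NNPP. intro Hne. apply Hdep. exists z, dz, z0, dz0. auto.
 - exists 0. split; [lra|]. intros z dz Hh t _.
   assert (Hz : z 0 ^ 2 + dz 0 ^ 2 <= 0)
     by (apply Rnot_lt_le; intro; apply Hnone; exists z, dz; auto).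
   destruct (hill_sol_zero z dz 0 Hh ltac:(nra) ltac:(nra) t) as [-> ->]. lra.
Qed.

End BoundedCoefficient.

(** * Zhukovskii's stability criterion *)

Section Zhukovskii.

Variables (q : R -> R) (T : R).
Hypothesis HT : 0 < T.
Hypothesis Hper : forall t, q (t + T) = q t.
Hypothesis Hlo : forall t, (PI / T) * (PI / T) < q t.
Hypothesis Hhi : forall t, q t <= (2 * PI / T) * (2 * PI / T).
Hypothesis Hstrict : forall a b, a < b -> exists s, a < s < b /\ q s < (2 * PI / T) * (2 * PI / T).

Let K := 1 + (2 * PI / T) * (2 * PI / T).

Lemma zhukovskii_coef_bound t : Rabs (1 - q t) <= K.
Proof.
 specialize (Hlo t). specialize (Hhi t). pose proof (Rle_0_sqr (PI / T)). unfold Rsqr in *.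
 apply Rabs_le. unfold K. lra.
Qed.

Lemma hill_sol_shift (z dz : R -> R) : hill_sol q z dz ->
  hill_sol q (fun t => z (t + T)) (fun t => dz (t + T)).
Proof.
 intros [H1 H2]. split; intros t; [apply is_derive_shift; auto|].
 eapply is_derive_eq;
   [apply (is_derive_shift dz (fun t => - (q t * z t))); auto | now rewrite Hper].
Qed.

Lemma hill_sol_arc_length (z dz : R -> R) (a b : R) : hill_sol q z dz -> a < b ->
  z a = 0 -> z b = 0 -> (forall s, a < s < b -> 0 < z s) -> T / 2 < b - a /\ dz b < 0.
Proof.
 intros Hh Hab Za Zb Hpos. pose proof PI_RGT_0. split.
 - replace (T / 2) with (PI / (2 * PI / T)) by (field; lra).
   apply (sturm_zero_gap q z dz (2 * PI / T) a b ltac:(apply Rdiv_lt_0_compat; lra) Hh Hab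
     Za Zb Hpos (fun t _ => Hhi t) (Hstrict a b Hab)).
 - assert (dz b <= 0) by apply (deriv_nonpos_at_first_zero z a b (dz b) Hab (proj1 Hh b) Zb Hpos).
   destruct (Req_dec (dz b) 0) as [E|]; [|lra]. exfalso.
   destruct (hill_sol_zero q K zhukovskii_coef_bound z dz b Hh Zb E ((a + b) / 2)) as [Hz _].
   specialize (Hpos ((a + b) / 2) ltac:(lra)). lra.
Qed.

Lemma floquet_sol_no_rising_zero (z dz : R -> R) (mu t0 : R) : hill_sol q z dz ->
  (forall t, z (t + T) = mu * z t) -> z t0 = 0 -> ~ 0 < dz t0.
Proof.
 intros Hh Hfl Z0 D0. pose proof PI_RGT_0. pose proof (proj1 Hh) as H1.
 assert (ZT : z (t0 + T) = 0) by (rewrite Hfl, Z0; ring).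
 (* the first two arcs after t0 both fit in [t0, t0 + T] but each is longer than T/2 *)
 destruct (first_zero_after z dz t0 (t0 + T) H1 ltac:(lra) Z0 D0 ZT) as [t1 [Ht1 [Zt1 Hpos1]]].
 assert (Ht1T : t1 < t0 + T).
 { destruct (Req_dec t1 (t0 + T)) as [E|]; [|lra]. exfalso. subst t1.
   apply (sturm_no_positive_arc_between_zeros q z dz (PI / T) t0
     ltac:(apply Rdiv_lt_0_compat; lra) Hh Z0); replace (PI / (PI / T)) with T by (field; lra);
     auto. }
 destruct (hill_sol_arc_length z dz t0 t1 Hh ltac:(lra) Z0 Zt1 Hpos1) as [G1 D1].
 destruct (first_zero_after (fun t => - z t) (fun t => - dz t) t1 (t0 + T)
   ltac:(intros; apply is_derive_Ropp; auto) Ht1T ltac:(cbv beta; rewrite Zt1; ring)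
   ltac:(lra) ltac:(cbv beta; rewrite ZT; ring)) as [t2 [Ht2 [Zt2 Hpos2]]].
 destruct (hill_sol_arc_length _ _ t1 t2 (hill_sol_opp q z dz Hh) ltac:(lra)
   ltac:(cbv beta; rewrite Zt1; ring) Zt2 Hpos2) as [G2 _].
 lra.
Qed.

Lemma floquet_sol_zero (z dz : R -> R) (mu : R) : hill_sol q z dz ->
  (forall t, z (t + T) = mu * z t) -> forall t, z t = 0 /\ dz t = 0.
Proof.
 intros Hh Hfl. pose proof PI_RGT_0.
 destruct (hill_sol_has_zero q z dz (PI / T) 0 ltac:(apply Rdiv_lt_0_compat; lra) Hh
   ltac:(intros; apply Rlt_le; auto)) as [t0 [_ Z0]].
 destruct (Rtotal_order (dz t0) 0) as [Hlt|[Heq|Hgt]].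
 - exfalso. apply (floquet_sol_no_rising_zero _ _ mu t0 (hill_sol_opp q z dz Hh)).
   + intros t; rewrite Hfl; ring.
   + rewrite Z0; ring.
   + lra.
 - apply (hill_sol_zero q K zhukovskii_coef_bound z dz t0 Hh Z0 Heq).
 - exfalso. apply (floquet_sol_no_rising_zero z dz mu t0 Hh Hfl Z0 Hgt).
Qed.

Lemma hill_sol_period_wronskian (z dz : R -> R) (s : R) : hill_sol q z dz ->
  z s * dz (s + T) - dz s * z (s + T) = z 0 * dz (0 + T) - dz 0 * z (0 + T).
Proof.
 intros Hh. destruct (hill_sol_shift z dz Hh) as [H3 H4]. destruct Hh as [H1 H2].
 apply (deriv_zero_const (fun s => z s * dz (s + T) - dz s * z (s + T))).
 intros t. eapply is_derive_eq; [apply is_derive_Rminus; apply is_derive_Rmult; auto|].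
 cbv beta; ring.
Qed.

Lemma hill_sol_period_wronskian_zero (z dz : R -> R) : hill_sol q z dz ->
  z 0 * dz (0 + T) - dz 0 * z (0 + T) = 0 -> z 0 = 0 /\ dz 0 = 0.
Proof.
 intros Hh HW. apply NNPP. intro Hnz.
 assert (HN : 0 < z 0 ^ 2 + dz 0 ^ 2).
 { destruct (Req_dec (z 0) 0); [assert (dz 0 <> 0) by tauto|]; nra. }
 (* the data at T is then a multiple mu of the data at 0, so z is a Floquet solution *)
 set (mu := (z (0 + T) * z 0 + dz (0 + T) * dz 0) / (z 0 ^ 2 + dz 0 ^ 2)).
 assert (Hw := hill_sol_lin q _ _ _ _ 1 (- mu) (hill_sol_shift z dz Hh) Hh).
 assert (Hw0 := hill_sol_zero q K zhukovskii_coef_bound _ _ 0 Hw).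
 cbv beta in Hw0.
 assert (Hz : forall t, z (t + T) = mu * z t).
 { intros t. enough (1 * z (t + T) + - mu * z t = 0) by lra. apply Hw0.
   - replace (1 * z (0 + T) + - mu * z 0)
       with (- dz 0 * (z 0 * dz (0 + T) - dz 0 * z (0 + T)) / (z 0 ^ 2 + dz 0 ^ 2))
       by (unfold mu; field; lra).
     rewrite HW. field; lra.
   - replace (1 * dz (0 + T) + - mu * dz 0)
       with (z 0 * (z 0 * dz (0 + T) - dz 0 * z (0 + T)) / (z 0 ^ 2 + dz 0 ^ 2))
       by (unfold mu; field; lra).
     rewrite HW. field; lra. }
 apply Hnz, (floquet_sol_zero z dz mu Hh Hz).
Qed.

Lemma hill_sol_period_recurrence (z dz : R -> R) : hill_sol q z dz ->
  z 0 * dz (0 + T) - dz 0 * z (0 + T) <> 0 ->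
  exists a, forall t, z (t + T + T) = a * z (t + T) - z t /\ dz (t + T + T) = a * dz (t + T) - dz t.
Proof.
 intros Hh HW.
 set (x0 := z 0). set (v0 := dz 0). set (x1 := z (0 + T)). set (v1 := dz (0 + T)).
 set (x2 := z (0 + T + T)). set (v2 := dz (0 + T + T)).
 assert (HD : x1 * v0 - v1 * x0 <> 0) by (unfold x0, v0, x1, v1; lra).
 set (a := (x2 * v0 - v2 * x0) / (x1 * v0 - v1 * x0)).
 set (b := (x1 * v2 - v1 * x2) / (x1 * v0 - v1 * x0)).
 assert (Hh1 := hill_sol_shift z dz Hh).
 assert (Hrec := hill_sol_unique q K zhukovskii_coef_bound _ _ _ _ 0 (hill_sol_shift _ _ Hh1)
   (hill_sol_lin q _ _ _ _ a b Hh1 Hh)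
   ltac:(cbv beta; fold x2 x1 x0; unfold a, b; field; auto)
   ltac:(cbv beta; fold v2 v1 v0; unfold a, b; field; auto)).
 cbv beta in Hrec.
 (* the Wronskian of z and its shift is T-invariant, which forces b = -1 *)
 assert (Hb : b = -1).
 { pose proof (hill_sol_period_wronskian z dz (0 + T) Hh) as HwT.
   destruct (Hrec 0) as [R1 R2]. fold x2 v2 x1 v1 x0 v0 in R1, R2, HwT. rewrite R1, R2 in HwT.
   apply (Rmult_eq_reg_r (x1 * v0 - v1 * x0)); auto.
   replace (-1 * (x1 * v0 - v1 * x0)) with (x0 * v1 - v0 * x1) by ring. rewrite <- HwT. ring. }
 exists a. intros t. destruct (Hrec t) as [R1 R2]. rewrite Hb in R1, R2. split; lra.
Qed.

Lemma hill_sol_period_trace_lt (z dz : R -> R) (a : R) : hill_sol q z dz ->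
  z 0 * dz (0 + T) - dz 0 * z (0 + T) <> 0 ->
  (forall t, z (t + T + T) = a * z (t + T) - z t /\ dz (t + T + T) = a * dz (t + T) - dz t) ->
  Rabs a < 2.
Proof.
 intros Hh HW Hrec. apply Rnot_le_lt. intro Ha.
 assert (Hdisc : 0 <= a * a - 4) by (unfold Rabs in Ha; destruct (Rcase_abs a); nra).
 (* a real root lam of lam^2 - a lam + 1 gives the Floquet solution z (t + T) - lam z t *)
 set (lam := (a + sqrt (a * a - 4)) / 2).
 assert (Hsq := sqrt_sqrt (a * a - 4) Hdisc).
 assert (Hlam : lam * lam - a * lam + 1 = 0) by (unfold lam; nra).
 assert (Hl0 : lam <> 0) by (intro E; rewrite E in Hlam; lra).
 assert (Hw := hill_sol_lin q _ _ _ _ 1 (- lam) (hill_sol_shift z dz Hh) Hh).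
 assert (Hfl : forall t,
   1 * z (t + T + T) + - lam * z (t + T) = / lam * (1 * z (t + T) + - lam * z t)).
 { intros t. destruct (Hrec t) as [R1 _]. rewrite R1.
   replace a with (lam + / lam) by (apply (Rmult_eq_reg_l lam); [field_simplify; lra | auto]).
   field; auto. }
 destruct (floquet_sol_zero _ _ (/ lam) Hw Hfl 0) as [E1 E2]. cbv beta in E1, E2.
 apply HW. replace (z (0 + T)) with (lam * z 0) by lra.
 replace (dz (0 + T)) with (lam * dz 0) by lra.
 ring.
Qed.

Lemma hill_sol_bounded (z dz : R -> R) : hill_sol q z dz ->
  exists C, forall t, 0 <= t -> z t ^ 2 + dz t ^ 2 <= C.
Proof.
 intros Hh.
 destruct (Req_dec (z 0 * dz (0 + T) - dz 0 * z (0 + T)) 0) as [HW|HW].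
 { exists 0. intros t _. destruct (hill_sol_period_wronskian_zero z dz Hh HW) as [Z0 D0].
   destruct (hill_sol_zero q K zhukovskii_coef_bound z dz 0 Hh Z0 D0 t) as [-> ->]. lra. }
 destruct (hill_sol_period_recurrence z dz Hh HW) as [a Hrec].
 assert (Ha := hill_sol_period_trace_lt z dz a Hh HW Hrec).
 assert (Hseq : forall n, z (INR (S (S n)) * T) = a * z (INR (S n) * T) - z (INR n * T) /\
   dz (INR (S (S n)) * T) = a * dz (INR (S n) * T) - dz (INR n * T)).
 { intros n. rewrite !S_INR.
   replace ((INR n + 1 + 1) * T) with (INR n * T + T + T) by ring.
   replace ((INR n + 1) * T) with (INR n * T + T) by ring. apply Hrec. }
 destruct (recurrence_sq_bounded (fun n => z (INR n * T)) a Ha (fun n => proj1 (Hseq n)))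
   as [Cz HCz].
 destruct (recurrence_sq_bounded (fun n => dz (INR n * T)) a Ha (fun n => proj2 (Hseq n)))
   as [Cd HCd].
 exists ((Cz + Cd) * exp (K * T)). intros t Ht.
 destruct (exists_period_index T t HT Ht) as [n Hn].
 eapply Rle_trans;
   [apply (hill_sol_norm_growth q K zhukovskii_coef_bound z dz (INR n * T) t Hh); lra|].
 assert (0 < K) by (unfold K; pose proof (Rle_0_sqr (2 * PI / T)); unfold Rsqr in *; lra).
 apply Rmult_le_compat.
 - apply Rplus_le_le_0_compat; apply pow2_ge_0.
 - apply Rlt_le, exp_pos.
 - apply Rplus_le_compat; [apply HCz | apply HCd].
 - destruct (Req_dec (t - INR n * T) T) as [->|]; [lra|].
   apply Rlt_le, exp_increasing, Rmult_lt_compat_l; lra.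
Qed.

Lemma hill_stable_zhukovskii : hill_trivial_stable q.
Proof.
 destruct (hill_uniform_norm_bound q K zhukovskii_coef_bound hill_sol_bounded) as [L [HL Hb]].
 exact (hill_stable_of_norm_bound q L HL Hb).
Qed.

End Zhukovskii.

(** * The first vertical mode *)

Lemma is_derive_asin_comp (u : R -> R) (du x : R) : is_derive u x du -> -1 < u x < 1 ->
  derivable_pt_lim (fun t => asin (u t)) x (/ sqrt (1 - (u x)²) * du).
Proof.
 intros H Hr. apply is_derive_Reals in H.
 assert (Ha : derivable_pt_lim asin (u x) (1 / sqrt (1 - (u x)²)))
   by (apply (derive_pt_eq_1 asin (u x) _ (derivable_pt_asin (u x) Hr)), derive_pt_asin).
 pose proof (derivable_pt_lim_comp u asin x du _ H Ha) as Hc. unfold comp in Hc.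
 replace (/ sqrt (1 - (u x)²) * du) with (1 / sqrt (1 - (u x)²) * du) by (unfold Rdiv; ring).
 exact Hc.
Qed.

Lemma arcsine_descent_time (u du : R -> R) (c a b : R) : a < b ->
  (forall x, a < x <= b -> is_derive u x (du x)) -> (forall x, a < x <= b -> -1 < u x < 1) ->
  u b = 0 -> (forall x, a < x <= b -> du x <= - c * sqrt (1 - (u x)²)) ->
  c * (b - a) <= PI / 2.
Proof.
 intros Hab Hu Hrange Ub Hdu. pose proof PI_RGT_0.
 (* asin o u decreases at rate at least c and vanishes at b *)
 assert (Hstep : forall t, a < t < b -> c * (b - t) <= PI / 2).
 { intros t Ht.
   destruct (MVT_cor2 (fun t => asin (u t)) (fun x => / sqrt (1 - (u x)²) * du x) t b
     ltac:(lra) ltac:(intros x Hx; apply is_derive_asin_comp; [apply Hu | apply Hrange]; lra))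
     as [xi [Hmvt Hxi]].
   rewrite Ub, asin_0 in Hmvt.
   assert (Hs : 0 < sqrt (1 - (u xi)²))
     by (apply sqrt_lt_R0; destruct (Hrange xi ltac:(lra)); unfold Rsqr; nra).
   assert (/ sqrt (1 - (u xi)²) * du xi <= - c).
   { apply (Rmult_le_reg_l (sqrt (1 - (u xi)²))); auto.
     replace (sqrt (1 - (u xi)²) * (/ sqrt (1 - (u xi)²) * du xi)) with (du xi) by (field; lra).
     specialize (Hdu xi ltac:(lra)). lra. }
   pose proof (asin_bound (u t)). nra. }
 destruct (Rle_dec c 0) as [|Hc]; [nra|].
 apply Rnot_lt_le. intro Hgt.
 set (t := (a + (b - PI / (2 * c))) / 2).
 assert (Hpc : PI / (2 * c) < b - a) by (apply (Rmult_lt_reg_l c); [lra|]; field_simplify; lra).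
 assert (0 < PI / (2 * c)) by (apply Rdiv_lt_0_compat; lra).
 specialize (Hstep t ltac:(unfold t; lra)).
 assert (c * (PI / (2 * c)) < c * (b - t)) by (apply Rmult_lt_compat_l; unfold t; lra).
 replace (c * (PI / (2 * c))) with (PI / 2) in * by (field; lra). lra.
Qed.

Lemma energy1_pos (alpha beta : R) : (alpha, beta) <> (0, 0) -> 0 < energy1 alpha beta.
Proof.
 intros Hab. unfold energy1.
 assert (0 < alpha ^ 2 \/ 0 < beta ^ 2).
 { destruct (Req_dec alpha 0) as [->|Ha]; [right | left; apply pow2_gt_0, Ha].
   apply pow2_gt_0. intros ->. apply Hab. reflexivity. }
 pose proof (pow2_ge_0 alpha). pose proof (pow2_ge_0 beta). pose proof (pow2_ge_0 (alpha ^ 2)).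
 replace (alpha ^ 4) with ((alpha ^ 2) ^ 2) by ring. lra.
Qed.

Lemma energy1_opp (u v : R) : energy1 (- u) (- v) = energy1 u v.
Proof. unfold energy1. field. Qed.

Lemma energy1_sq_le (u v : R) : u ^ 2 <= 2 / 3 * energy1 u v.
Proof.
 unfold energy1. pose proof (pow2_ge_0 v). pose proof (pow2_ge_0 (u ^ 2)).
 replace (u ^ 4) with ((u ^ 2) ^ 2) by ring. lra.
Qed.

Lemma energy1_amplitude_sq_le (u v A : R) : energy1 u v = energy1 A 0 -> u ^ 2 <= A ^ 2.
Proof.
 unfold energy1. intros HE. pose proof (pow2_ge_0 v). pose proof (pow2_ge_0 u).
 pose proof (pow2_ge_0 A). apply Rnot_lt_le. intro Hlt.
 assert (A ^ 2 * A ^ 2 < u ^ 2 * u ^ 2) by (apply Rmult_le_0_lt_compat; lra).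
 replace (u ^ 4) with (u ^ 2 * u ^ 2) in HE by ring.
 replace (A ^ 4) with (A ^ 2 * A ^ 2) in HE by ring.
 lra.
Qed.

Lemma energy1_speed_bound (u v A : R) : energy1 u v = energy1 A 0 ->
  (3 + 3 / 4 * A ^ 2) * (A ^ 2 - u ^ 2) <= v ^ 2.
Proof.
 intros HE. pose proof (energy1_amplitude_sq_le u v A HE). unfold energy1 in HE.
 (* v^2 = (A^2 - u^2) (3 + 3/4 (A^2 + u^2)) *)
 assert (Hv : v ^ 2 = (A ^ 2 - u ^ 2) * (3 + 3 / 4 * (A ^ 2 + u ^ 2))) by nra.
 pose proof (pow2_ge_0 u). nra.
Qed.

Lemma sqr_le_sqr_pi_div (c T : R) : 0 <= c -> 0 < T -> c * T <= PI -> c * c <= (PI / T) * (PI / T).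
Proof.
 intros Hc HT H. assert (c <= PI / T).
 { apply (Rmult_le_reg_r T); auto. replace (PI / T * T) with PI by (field; lra). exact H. }
 nra.
Qed.

Lemma sqr_pi_div_lt_sqr (M T : R) : 0 < M -> 0 < T -> PI / M < T -> (PI / T) * (PI / T) < M * M.
Proof.
 intros HM HT H. pose proof PI_RGT_0.
 assert (PI / T < M).
 { apply (Rmult_lt_reg_r T); auto. replace (PI / T * T) with PI by (field; lra).
   apply (Rmult_lt_reg_l (/ M)); [apply Rinv_0_lt_compat; lra|].
   replace (/ M * (M * T)) with T by (field; lra). rewrite Rmult_comm. exact H. }
 assert (0 < PI / T) by (apply Rdiv_lt_0_compat; lra). nra.
Qed.

Definition duffing_sol (y dy : R -> R) : Prop :=
  (forall t, is_derive y t (dy t)) /\ (forall t, is_derive dy t (- (3 * y t + 3 / 2 * y t ^ 3))).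

Lemma duffing_energy_const (y dy : R -> R) (s t : R) : duffing_sol y dy ->
  energy1 (y t) (dy t) = energy1 (y s) (dy s).
Proof.
 intros [H1 H2]. unfold energy1.
 apply (deriv_zero_const (fun t => dy t ^ 2 / 2 + 3 / 2 * y t ^ 2 + 3 / 8 * y t ^ 4)). intros x.
 apply (is_derive_ext (fun t => / 2 * dy t ^ 2 + 3 / 2 * y t ^ 2 + 3 / 8 * y t ^ 4));
   [intros u; lra|].
 eapply is_derive_eq.
 - apply is_derive_Rplus; [apply is_derive_Rplus|]; apply is_derive_Rscal.
   + apply is_derive_Rsqr, H2.
   + apply is_derive_Rsqr, H1.
   + apply is_derive_pow, H1.
 - simpl. field.
Qed.

Lemma duffing_hill_sol (y dy : R -> R) : duffing_sol y dy ->
  hill_sol (fun t => 3 + 3 / 2 * y t ^ 2) y dy.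
Proof. intros [H1 H2]; split; auto. intros t; eapply is_derive_eq; [apply H2 | ring]. Qed.

Lemma duffing_sol_opp (y dy : R -> R) : duffing_sol y dy ->
  duffing_sol (fun t => - y t) (fun t => - dy t).
Proof.
 intros [H1 H2]; split; intros t; [apply is_derive_Ropp; auto|].
 eapply is_derive_eq; [apply is_derive_Ropp, H2 | ring].
Qed.

Lemma duffing_sol_reflect (y dy : R -> R) (c : R) : duffing_sol y dy ->
  duffing_sol (fun t => y (c - t)) (fun t => - dy (c - t)).
Proof.
 intros [H1 H2]; split; intros t; [apply is_derive_reflect; auto|].
 eapply is_derive_eq.
 - apply is_derive_Ropp, (is_derive_reflect dy (fun t => - (3 * y t + 3 / 2 * y t ^ 3))), H2.
 - ring.
Qed.

Lemma duffing_sol_reflect_opp (y dy : R -> R) (c : R) : duffing_sol y dy ->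
  duffing_sol (fun t => - y (c - t)) (fun t => dy (c - t)).
Proof.
 intros [H1 H2]; split; intros t.
 - eapply is_derive_eq; [apply is_derive_Ropp, is_derive_reflect, H1 | ring].
 - eapply is_derive_eq;
     [apply (is_derive_reflect dy (fun t => - (3 * y t + 3 / 2 * y t ^ 3))), H2 | ring].
Qed.

Lemma duffing_sol_unique (y1 dy1 y2 dy2 : R -> R) (B t0 : R) :
  duffing_sol y1 dy1 -> duffing_sol y2 dy2 ->
  (forall t, y1 t ^ 2 <= B) -> (forall t, y2 t ^ 2 <= B) ->
  y1 t0 = y2 t0 -> dy1 t0 = dy2 t0 -> forall t, y1 t = y2 t.
Proof.
 intros [H1 H2] [H3 H4] B1 B2 E1 E2 t.
 (* the difference solves a linear Hill equation with a bounded coefficient *)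
 set (L t := 3 + 3 / 2 * (y1 t ^ 2 + y1 t * y2 t + y2 t ^ 2)).
 assert (Hh : hill_sol L (fun t => y1 t - y2 t) (fun t => dy1 t - dy2 t)).
 { split; intros x; eapply is_derive_eq; try (apply is_derive_Rminus; eauto); unfold L; ring. }
 assert (HL : forall x, Rabs (1 - L x) <= 2 + 9 / 2 * B).
 { intros x. specialize (B1 x). specialize (B2 x). apply Rabs_le. unfold L.
   pose proof (pow2_ge_0 (y1 x + y2 x)). pose proof (pow2_ge_0 (y1 x - y2 x)). nra. }
 destruct (hill_sol_zero L _ HL _ _ t0 Hh ltac:(cbv beta; lra) ltac:(cbv beta; lra) t). lra.
Qed.

Section DuffingMode.

Variables (y dy : R -> R) (E0 : R).
Hypothesis Hsol : duffing_sol y dy.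
Hypothesis HE : forall t, energy1 (y t) (dy t) = E0.
Hypothesis HE0 : 0 < E0.

Lemma duffing_sq_bound (t : R) : y t ^ 2 <= 2 / 3 * E0.
Proof. rewrite <- (HE t). apply energy1_sq_le. Qed.

Lemma duffing_reflect_turning (c : R) : dy c = 0 -> forall t, y (2 * c - t) = y t.
Proof.
 intros Dc.
 apply (duffing_sol_unique _ _ y dy (2 / 3 * E0) c (duffing_sol_reflect y dy (2 * c) Hsol)
   Hsol (fun t => duffing_sq_bound _) duffing_sq_bound); cbv beta.
 - f_equal; ring.
 - replace (2 * c - c) with c by ring. rewrite Dc; ring.
Qed.

Lemma duffing_reflect_zero (c : R) : y c = 0 -> forall t, - y (2 * c - t) = y t.
Proof.
 intros Yc.
 apply (duffing_sol_unique _ _ y dy (2 / 3 * E0) c (duffing_sol_reflect_opp y dy (2 * c) Hsol)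
   Hsol); cbv beta.
 - intros t. replace ((- y (2 * c - t)) ^ 2) with (y (2 * c - t) ^ 2) by ring.
   apply duffing_sq_bound.
 - apply duffing_sq_bound.
 - replace (2 * c - c) with c by ring. rewrite Yc; ring.
 - f_equal; ring.
Qed.

Lemma duffing_deriv_at_zero (c : R) : y c = 0 -> dy c <> 0.
Proof. intros Yc Dc. specialize (HE c). rewrite Yc, Dc in HE. unfold energy1 in HE. lra. Qed.

Lemma duffing_first_arc (z0 : R) : y z0 = 0 -> 0 < dy z0 ->
  exists z1, z0 < z1 /\ y z1 = 0 /\ (forall s, z0 < s < z1 -> 0 < y s) /\ dy z1 < 0.
Proof.
 intros Y0 D0. pose proof Hsol as [H1 _].
 assert (Hs3 : 0 < sqrt 3) by (apply sqrt_lt_R0; lra).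
 destruct (hill_sol_has_zero _ y dy (sqrt 3) (z0 + 1) Hs3 (duffing_hill_sol y dy Hsol))
   as [b [Hb Yb]].
 { intros t. rewrite sqrt_sqrt by lra. pose proof (pow2_ge_0 (y t)). lra. }
 destruct (first_zero_after y dy z0 b H1 ltac:(lra) Y0 D0 Yb) as [z1 [Hz1 [Y1 Hpos]]].
 exists z1. repeat split; auto; try lra.
 pose proof (deriv_nonpos_at_first_zero y z0 z1 (dy z1) ltac:(lra) (H1 z1) Y1 Hpos).
 pose proof (duffing_deriv_at_zero z1 Y1). lra.
Qed.

Lemma duffing_turning_point (z0 z1 : R) : z0 < z1 -> 0 < dy z0 -> dy z1 < 0 ->
  exists t1, z0 < t1 < z1 /\ dy t1 = 0 /\ forall t, t1 < t <= z1 -> dy t < 0.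
Proof.
 intros Hz D0 D1. pose proof Hsol as [_ H2].
 (* the last zero of dy before z1 is the first zero of s |-> - dy (z1 - s) *)
 assert (Hc : continuity (fun s => - dy (z1 - s))).
 { apply (is_derive_continuity _ (fun s => - - (- (3 * y (z1 - s) + 3 / 2 * y (z1 - s) ^ 3)))).
   intros s.
   apply is_derive_Ropp, (is_derive_reflect dy (fun t => - (3 * y t + 3 / 2 * y t ^ 3))), H2. }
 destruct (first_zero _ 0 (z1 - z0) Hc ltac:(lra) ltac:(cbv beta; rewrite Rminus_0_r; lra)
   ltac:(cbv beta; replace (z1 - (z1 - z0)) with z0 by ring; lra)) as [c [Hcc [Fc Fpos]]].
 exists (z1 - c). repeat split; try lra.
 - destruct (Req_dec c (z1 - z0)) as [E|]; [|lra].
   rewrite E in Fc. replace (z1 - (z1 - z0)) with z0 in Fc by ring. lra.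
 - intros t Ht. specialize (Fpos (z1 - t) ltac:(lra)).
   replace (z1 - (z1 - t)) with t in Fpos by ring. lra.
Qed.

Lemma duffing_sq_lt_somewhere (A : R) : energy1 A 0 = E0 ->
  forall a b, a < b -> exists s, a < s < b /\ y s ^ 2 < A ^ 2.
Proof.
 intros HA a b Hab. apply NNPP. intro Hn.
 assert (Heq : forall s, a < s < b -> y s ^ 2 = A ^ 2).
 { intros s Hs. pose proof (energy1_amplitude_sq_le (y s) (dy s) A ltac:(rewrite HE; auto)).
   apply Rle_antisym; auto. apply Rnot_lt_le. intro; apply Hn. exists s; auto. }
 (* dy would vanish on (a, b), although dy' = - y (3 + 3/2 y^2) does not *)
 assert (Hdz : forall s, a < s < b -> dy s = 0).
 { intros s Hs. specialize (Heq s Hs). pose proof (HE s). rewrite <- HA in H. unfold energy1 in H.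
   replace (y s ^ 4) with ((y s ^ 2) ^ 2) in H by ring.
   replace (A ^ 4) with ((A ^ 2) ^ 2) in H by ring.
   rewrite Heq in H. nra. }
 set (m := (a + b) / 2).
 assert (Hloc : locally m (fun t => dy t = 0)).
 { exists (mkposreal ((b - a) / 2) ltac:(lra)). intros t Ht. apply Hdz.
   apply Rabs_lt_between' in Ht. unfold m in Ht. simpl in Ht. lra. }
 pose proof Hsol as [_ H2].
 assert (Hd0 := is_derive_ext_loc dy (fun _ => 0) m _ Hloc (H2 m)).
 apply is_derive_unique in Hd0. rewrite Derive_const in Hd0.
 assert (Hym : y m <> 0).
 { intro E. pose proof (Heq m ltac:(unfold m; lra)). rewrite E in H.
   unfold energy1 in HA. assert (A = 0) by nra.
   subst A. lra. }
 pose proof (pow2_ge_0 (y m)).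
 assert (y m * (3 + 3 / 2 * y m ^ 2) = 0) by lra.
 apply Rmult_integral in H0. destruct H0; lra.
Qed.

Lemma duffing_half_arc_long (A a b : R) : energy1 A 0 = E0 -> a < b -> y a = 0 -> y b = 0 ->
  (forall s, a < s < b -> 0 < y s) -> (PI / (b - a)) * (PI / (b - a)) < 3 + 3 / 2 * A ^ 2.
Proof.
 intros HA Hab Ya Yb Hpos. pose proof (pow2_ge_0 A).
 assert (HM : 0 < sqrt (3 + 3 / 2 * A ^ 2)) by (apply sqrt_lt_R0; lra).
 rewrite <- (sqrt_sqrt (3 + 3 / 2 * A ^ 2)) by lra.
 apply sqr_pi_div_lt_sqr; [exact HM | lra|].
 apply (sturm_zero_gap _ y dy _ a b HM (duffing_hill_sol y dy Hsol) Hab Ya Yb Hpos);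
   rewrite sqrt_sqrt by lra.
 - intros t _. pose proof (energy1_amplitude_sq_le (y t) (dy t) A ltac:(rewrite HE; auto)). lra.
 - destruct (duffing_sq_lt_somewhere A HA a b Hab) as [s [Hs Hlt]]. exists s. split; auto. lra.
Qed.

Lemma duffing_descent_range (A x : R) : 0 < A -> energy1 A 0 = E0 -> 0 <= y x -> dy x < 0 ->
  -1 < / A * y x < 1.
Proof.
 intros HA0 HA Hy Hdy.
 pose proof (energy1_amplitude_sq_le (y x) (dy x) A ltac:(rewrite HE; auto)).
 assert (y x < A).
 { apply Rnot_le_lt. intro Hge. assert (y x = A) by nra. pose proof (HE x).
   rewrite <- HA, H0 in H1. unfold energy1 in H1. assert (dy x ^ 2 = 0) by lra. nra. }
 split; [|apply (Rmult_lt_reg_l A); [lra | field_simplify; lra]].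
 assert (0 <= / A * y x) by (apply Rmult_le_pos; [left; apply Rinv_0_lt_compat|]; lra). lra.
Qed.

Lemma duffing_descent_rate (A x : R) : 0 < A -> energy1 A 0 = E0 -> dy x < 0 ->
  / A * dy x <= - sqrt (3 + 3 / 4 * A ^ 2) * sqrt (1 - (/ A * y x)²).
Proof.
 intros HA0 HA Hdy. pose proof (pow2_ge_0 A).
 set (c := sqrt (3 + 3 / 4 * A ^ 2)).
 assert (Hc2 : c * c = 3 + 3 / 4 * A ^ 2) by (apply sqrt_sqrt; lra).
 assert (0 <= c) by apply sqrt_pos.
 pose proof (energy1_amplitude_sq_le (y x) (dy x) A ltac:(rewrite HE; auto)) as Hsq.
 pose proof (energy1_speed_bound (y x) (dy x) A ltac:(rewrite HE; auto)) as Hsp.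
 set (u := / A * y x). set (w := / A * dy x).
 assert (Hy : y x = A * u) by (unfold u; field; lra).
 assert (Hdw : dy x = A * w) by (unfold w; field; lra).
 rewrite Hy in Hsq, Hsp. rewrite Hdw in Hsp, Hdy.
 assert (HA2 : 0 < A ^ 2) by (apply pow2_gt_0; lra).
 assert (Hu2 : u² <= 1) by (unfold Rsqr; nra).
 assert (HS2 : sqrt (1 - u²) * sqrt (1 - u²) = 1 - u²) by (apply sqrt_sqrt; lra).
 pose proof (sqrt_pos (1 - u²)).
 assert (Hw2 : c * c * (1 - u²) <= w * w) by (rewrite Hc2; unfold Rsqr in *; nra).
 assert (w < 0) by nra.
 assert (0 <= c * sqrt (1 - u²)) by (apply Rmult_le_pos; lra).
 nra.
Qed.

Lemma duffing_quarter_period_bound (A t1 z1 : R) : 0 < A -> energy1 A 0 = E0 -> t1 < z1 ->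
  y z1 = 0 -> (forall t, t1 < t <= z1 -> 0 <= y t /\ dy t < 0) ->
  3 + 3 / 4 * A ^ 2 <= (PI / (2 * (z1 - t1))) * (PI / (2 * (z1 - t1))).
Proof.
 intros HA0 HA Hz Y1 Hdesc. pose proof (pow2_ge_0 A).
 rewrite <- (sqrt_sqrt (3 + 3 / 4 * A ^ 2)) by lra.
 apply sqr_le_sqr_pi_div; [apply sqrt_pos | lra|].
 (* u = y / A runs from 1 down to 0 with u' <= - c sqrt (1 - u^2) *)
 enough (sqrt (3 + 3 / 4 * A ^ 2) * (z1 - t1) <= PI / 2) by lra.
 apply (arcsine_descent_time (fun t => / A * y t) (fun t => / A * dy t) _ t1 z1 Hz).
 - intros x _. apply is_derive_Rscal, (proj1 Hsol).
 - intros x Hx. destruct (Hdesc x Hx). apply duffing_descent_range; auto.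
 - cbv beta. rewrite Y1. ring.
 - intros x Hx. apply duffing_descent_rate; auto. apply Hdesc, Hx.
Qed.

Lemma duffing_half_period_from_zero (z0 : R) : y z0 = 0 -> 0 < dy z0 ->
  exists T A, 0 < T /\ energy1 A 0 = E0 /\ (exists t1, y t1 ^ 2 = A ^ 2) /\
    (forall t, y (t + T) = - y t) /\
    3 + 3 / 4 * A ^ 2 <= (PI / T) * (PI / T) < 3 + 3 / 2 * A ^ 2.
Proof.
 intros Y0 D0.
 destruct (duffing_first_arc z0 Y0 D0) as [z1 [Hz1 [Y1 [Hpos D1]]]].
 destruct (duffing_turning_point z0 z1 Hz1 D0 D1) as [t1 [Ht1 [Dt1 Hdesc]]].
 assert (Hsym := duffing_reflect_turning t1 Dt1).
 assert (HA0 : 0 < y t1) by (apply Hpos; lra).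
 assert (HA : energy1 (y t1) 0 = E0) by (rewrite <- (HE t1), Dt1; reflexivity).
 exists (2 * (z1 - t1)), (y t1). repeat split; auto; try lra.
 - exists t1. reflexivity.
 - intros t. rewrite <- (duffing_reflect_zero z1 Y1 (t + 2 * (z1 - t1))).
   replace (2 * z1 - (t + 2 * (z1 - t1))) with (2 * t1 - t) by ring. now rewrite Hsym.
 - apply (duffing_quarter_period_bound (y t1) t1 z1 HA0 HA ltac:(lra) Y1).
   intros t Ht. split; [|apply Hdesc, Ht].
   destruct (Req_dec t z1) as [->|]; [lra | apply Rlt_le, Hpos; lra].
 - (* the arc (2 t1 - z1, z1) is symmetric about t1 *)
   replace (2 * (z1 - t1)) with (z1 - (2 * t1 - z1)) by ring.
   apply (duffing_half_arc_long (y t1) (2 * t1 - z1) z1 HA ltac:(lra)); auto.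
   + now rewrite Hsym.
   + intros s Hs. destruct (Rle_dec s t1); [rewrite <- Hsym|]; apply Hpos; lra.
Qed.

End DuffingMode.

Lemma duffing_half_period (y dy : R -> R) (E0 : R) : duffing_sol y dy ->
  (forall t, energy1 (y t) (dy t) = E0) -> 0 < E0 ->
  exists T A, 0 < T /\ energy1 A 0 = E0 /\ (exists t1, y t1 ^ 2 = A ^ 2) /\
    (forall t, y (t + T) = - y t) /\
    3 + 3 / 4 * A ^ 2 <= (PI / T) * (PI / T) < 3 + 3 / 2 * A ^ 2.
Proof.
 intros Hsol HE HE0.
 destruct (hill_sol_has_zero _ y dy (sqrt 3) 0 ltac:(apply sqrt_lt_R0; lra)
   (duffing_hill_sol y dy Hsol)
   ltac:(intros t; rewrite sqrt_sqrt by lra; pose proof (pow2_ge_0 (y t)); lra)) as [z0 [_ Y0]].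
 pose proof (duffing_deriv_at_zero y dy E0 HE HE0 z0 Y0).
 destruct (Rlt_dec 0 (dy z0)) as [Hpos|Hneg].
 - exact (duffing_half_period_from_zero y dy E0 Hsol HE HE0 z0 Y0 Hpos).
 - (* the statement is invariant under y |-> - y *)
   destruct (duffing_half_period_from_zero (fun t => - y t) (fun t => - dy t) E0
     (duffing_sol_opp y dy Hsol) ltac:(intros t; cbv beta; rewrite energy1_opp; auto) HE0 z0
     ltac:(cbv beta; rewrite Y0; ring) ltac:(cbv beta; lra))
     as [T [A [HT [HA [[t1 Ht1] [Hanti Hbnd]]]]]].
   exists T, A. repeat split; auto; try apply Hbnd.
   + exists t1. rewrite <- Ht1. ring.
   + intros t. specialize (Hanti t). lra.
Qed.

Lemma amplitude_sq_le_of_sup (u A : R) : Rabs u <= sqrt (10 / 21) -> u ^ 2 = A ^ 2 ->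
  A ^ 2 <= 10 / 21.
Proof.
 intros Hu HuA. rewrite <- HuA, <- (sqrt_sqrt (10 / 21)) by lra.
 pose proof (sqrt_pos (10 / 21)). unfold Rabs in Hu. destruct (Rcase_abs u); nra.
Qed.

Lemma amplitude_sq_le_of_energy (A : R) : energy1 A 0 <= 235 / 294 -> A ^ 2 <= 10 / 21.
Proof.
 unfold energy1. intros HE. pose proof (pow2_ge_0 A).
 replace (A ^ 4) with (A ^ 2 * A ^ 2) in HE by ring. nra.
Qed.

Theorem theorem4p1 (alpha beta : R) (y dy : R -> R) :
  (alpha, beta) <> (0, 0) ->
  (forall t, is_derive y t (dy t)) ->
  (forall t, is_derive dy t (- (3 * y t + 3 / 2 * y t ^ 3))) ->
  y 0 = alpha -> dy 0 = beta ->
  ((forall t, Rabs (y t) <= sqrt (10 / 21)) \/ energy1 alpha beta <= 235 / 294) ->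
  hill_trivial_stable (fun t => 7 + 27 / 2 * y t ^ 2).
Proof.
 intros Hab H1 H2 Y0 D0 Hsmall.
 assert (Hsol : duffing_sol y dy) by (split; auto).
 assert (HE : forall t, energy1 (y t) (dy t) = energy1 alpha beta)
   by (intros t; rewrite (duffing_energy_const y dy 0 t Hsol), Y0, D0; reflexivity).
 assert (HE0 := energy1_pos alpha beta Hab).
 destruct (duffing_half_period y dy _ Hsol HE HE0)
   as [T [A [HT [HA [[t1 Ht1] [Hanti [Hup Hlow]]]]]]].
 assert (HA2 : A ^ 2 <= 10 / 21).
 { destruct Hsmall as [Hsup|Hen].
   - exact (amplitude_sq_le_of_sup (y t1) A (Hsup t1) Ht1).
   - apply amplitude_sq_le_of_energy. now rewrite HA. }
 assert (Hsq : forall t, y t ^ 2 <= A ^ 2)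
   by (intros t; apply (energy1_amplitude_sq_le _ (dy t)); now rewrite HE, HA).
 assert (H2T : (2 * PI / T) * (2 * PI / T) = 4 * ((PI / T) * (PI / T))) by (field; lra).
 apply (hill_stable_zhukovskii _ T HT).
 - intros t. rewrite Hanti. ring.
 - intros t. pose proof (pow2_ge_0 (y t)). lra.
 - intros t. specialize (Hsq t). lra.
 - intros a b Hab'.
   destruct (duffing_sq_lt_somewhere y dy _ Hsol HE HE0 A HA a b Hab') as [s [Hs Hlt]].
   exists s. split; auto. lra.
Qed.
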